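(* Let $\sigma=(a_1,\ldots,a_s)$ be a partition of the positive integer $r$ with $a_1\ge a_2\ge\cdots\ge a_s\ge 1$, let $n\ge s$ and $q\ge a_1$, and let $H=H(n,r,q\mid\sigma)$. Let $1\le k\le r-1$. Then \[\alpha_k(H)=\max\Big\{\, q\,(t(B)-1)+\sum_{i=t(B)}^{s} b_i+(n-s)\,b_s \;:\; B=(b_1,\ldots,b_n)\in M(q,k,\sigma)\Big\}.\]
   Context: A $\sigma$-hypergraph $H=H(n,r,q\mid\sigma)$, for a partition $\sigma=(a_1,\ldots,a_s)$ of $r$ with $s=s(\sigma)$ parts, is the $r$-uniform hypergraph whose vertex set is the disjoint union of $n$ classes $V_1,\ldots,V_n$, each of size $q$; an $r$-subset $K$ of vertices is an edge iff the multiset of non-zero values $|K\cap V_i|$ ($1\le i\le n$) equals $\sigma$. For $1\le k\le r-1$, a set $S$ of vertices of an $r$-uniform hypergraph is $k$-independent if $|E\cap S|\le k$ for every edge $E$; $\alpha_k(H)$ is the largest cardinality of a $k$-independent set. A sequence $B=(b_1,\ldots,b_n)$ of non-negative integers is $(q,k,\sigma)$-feasible if $b_1\ge b_2\ge\cdots\ge b_n$, $b_j=b_s$ for all $j\ge s$, $q\ge\max\{a_1,b_1\}$, and $\sum_{i=1}^{s}\min\{a_i,b_i\}=k$. A feasible sequence $B^*$ dominates a feasible sequence $B$ if $b^*_i\ge b_i$ for all $i$ and $\sum_i b^*_i>\sum_i b_i$; a feasible sequence is maximal if no feasible sequence dominates it. $M(q,k,\sigma)$ is the set of all maximal $(q,k,\sigma)$-feasible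 sequences. For a feasible sequence $B$, $t(B)$ denotes the smallest index $t\in\{1,\ldots,s\}$ with $b_t<a_t$ (such an index exists since $k<r$). *)

From mathcomp Require Import all_boot.
Set Implicit Arguments. Unset Strict Implicit. Unset Printing Implicit Defensive.

(* Conventions: sigma = (a_1,...,a_s) is a seq nat, a_i = nth 0 sigma (i-1).
   Vertices of H(n,r,q|sigma) are pairs (i, j) : 'I_n * 'I_q; class V_i = {(i, _)}.
   A sequence B = (b_1,...,b_n) is a seq nat of size n, b_i = nth 0 B (i-1). *)

Section SigmaHypergraph.
Variables (n q : nat) (sigma : seq nat).

Definition vtx := ('I_n * 'I_q)%type.

Definition class_count (K : {set vtx}) (i : 'I_n) : nat :=
  #|[set v in K | v.1 == i]|.

Definition is_edge (K : {set vtx}) : bool :=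
  (#|K| == sumn sigma) &&
  perm_eq [seq c <- [seq class_count K i | i <- enum 'I_n] | 0 < c] sigma.

Definition k_independent (k : nat) (S : {set vtx}) : bool :=
  [forall E : {set vtx}, is_edge E ==> (#|E :&: S| <= k)].

Definition alpha_k (k : nat) : nat :=
  \max_(S : {set vtx} | k_independent k S) #|S|.

End SigmaHypergraph.

Section Feasible.
Variables (n q k : nat) (sigma : seq nat).

Local Notation s := (size sigma).
Local Notation a i := (nth 0 sigma i).   (* 0-based: a i = a_{i+1} *)

Definition feasible (B : seq nat) : Prop :=
  [/\ size B = n,
      sorted geq B,
      (forall j, s.-1 <= j < n -> nth 0 B j = nth 0 B s.-1),
      maxn (a 0) (nth 0 B 0) <= q
    & \sum_(i < s) minn (a i) (nth 0 B i) = k].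

Definition dominates (Bs B : seq nat) : Prop :=
  (forall i, i < n -> nth 0 B i <= nth 0 Bs i) /\
  \sum_(i < n) nth 0 B i < \sum_(i < n) nth 0 Bs i.

Definition maximal_feasible (B : seq nat) : Prop :=
  feasible B /\ ~ (exists Bs, feasible Bs /\ dominates Bs B).

(* t(B): smallest 1-based index t in {1..s} with b_t < a_t *)
Definition tB (B : seq nat) : nat :=
  (find (fun i => nth 0 B i < a i) (iota 0 s)).+1.

Definition value (B : seq nat) : nat :=
  q * (tB B).-1 + \sum_((tB B).-1 <= i < s) nth 0 B i + (n - s) * nth 0 B s.-1.

End Feasible.

(* Let c_1 >= ... >= c_n be the sorted class sizes |S :&: V_i| of a vertex set S,
   and a_i = 0 for i > s. By a rearrangement inequality for min, an edge meets S in
   at most sum_i min(a_i, c_i) vertices, and the edge putting a_i vertices into the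
   class of the i-th largest count attains this. Hence every feasible B gives a
   k-independent set with class sizes (q, ..., q, b_t, ..., b_n), of size value(B).
   Conversely, the sorted class sizes of a maximum k-independent set, made constant
   after position s, can be raised one unit at a time until sum_i min(a_i, .) = k,
   and then to a maximal feasible sequence, whose value is at least its sum. *)

From mathcomp Require Import all_boot.
From mathcomp Require Import zify.
From Stdlib Require Import Classical.

Set Implicit Arguments.
Unset Strict Implicit.
Unset Printing Implicit Defensive.

Lemma sum_ord_ltn c N : \sum_(t < N) (t < c : nat) = minn c N.
Proof.
elim: N => [|N IH]; first by rewrite big_ord0 minn0.
by rewrite big_ord_recr /= IH; case: (ltnP N c) => /=; lia.
Qed.

Lemma minn_sum_ord x y N : minn x y <= N ->
  minn x y = \sum_(t < N) ((t < x) && (t < y) : nat).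
Proof.
move=> le_xyN; rewrite (eq_bigr (fun t : 'I_N => (t < minn x y : nat))).
  by rewrite sum_ord_ltn; lia.
by move=> t _; rewrite leq_min.
Qed.

Lemma sumn_nth s n : size s = n -> sumn s = \sum_(m < n) nth 0 s m.
Proof. by move=> <-; rewrite sumnE (big_nth 0) big_mkord. Qed.

Lemma count_nth (p : pred nat) s n : size s = n ->
  count p s = \sum_(m < n) p (nth 0 s m).
Proof.
move=> <-; rewrite -sumn_count (sumn_nth (size_map _ _)).
by apply: eq_bigr => m _; rewrite (nth_map 0).
Qed.

Lemma sorted_geq_nth X i j : sorted geq X -> i <= j -> nth 0 X j <= nth 0 X i.
Proof.
move=> sX le_ij; case: (ltnP j (size X)) => [lt_jX|]; last by move/(nth_default 0) ->.
have /= := sorted_leq_nth (rev_trans leq_trans) leqnn 0 sX.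
by apply; rewrite ?inE // (leq_ltn_trans le_ij).
Qed.

Lemma sorted_geq_ltn_nth t X m : sorted geq X -> m < size X ->
  (t < nth 0 X m) = (m < count (ltn t) X).
Proof.
elim: X m => [|x X IH] m //= sX lt_mX.
have le_x u : u \in X -> u <= x.
  by apply/allP: u; exact: order_path_min (rev_trans leq_trans) sX.
case: (ltnP t x) => [lt_tx|le_xt].
  by case: m lt_mX => [|m] //= lt_mX; rewrite IH ?(path_sorted sX).
have -> : count (ltn t) X = 0.
  apply/eqP; rewrite -leqn0 leqNgt -has_count; apply/hasP => -[u /le_x le_ux].
  by rewrite /= ltnNge (leq_trans le_ux le_xt).
case: m lt_mX => [|m] /= lt_mX; first by rewrite ltnNge le_xt.
by apply/negbTE; rewrite -leqNgt (leq_trans (le_x _ (mem_nth 0 lt_mX))).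
Qed.

Lemma sum_index_perm_iota n (F : nat -> nat -> nat) Is : perm_eq Is (iota 0 n) ->
  \sum_(i < n) F (index (i : nat) Is) i = \sum_(m < n) F m (nth 0 Is m).
Proof.
move=> pIs; have uIs : uniq Is by rewrite (perm_uniq pIs) iota_uniq.
have szIs : size Is = n by rewrite (perm_size pIs) size_iota.
rewrite -(big_mkord xpredT (fun i => F (index i Is) i)) /index_iota subn0.
rewrite -(perm_big _ pIs) /= (big_nth 0) szIs big_mkord.
by apply: eq_bigr => m _; rewrite index_uniq ?szIs.
Qed.

Lemma perm_index_iota n (f : nat -> nat) Is : perm_eq Is (iota 0 n) ->
  perm_eq [seq f (index i Is) | i <- iota 0 n] (mkseq f n).
Proof.
move=> pIs; have uIs : uniq Is by rewrite (perm_uniq pIs) iota_uniq.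
have szIs : size Is = n by rewrite (perm_size pIs) size_iota.
have -> : mkseq f n = [seq f (index i Is) | i <- Is].
  rewrite -[Is in map _ Is](mkseq_nth 0) /mkseq -map_comp szIs.
  by apply/eq_in_map => m; rewrite mem_iota => /andP [_ lt_mn] /=; rewrite index_uniq ?szIs.
by rewrite perm_map // perm_sym.
Qed.

Section MinRearrangement.
Variable n : nat.

Lemma sum_minn_levels (F G : nat -> nat) N : (forall m, m < n -> minn (F m) (G m) <= N) ->
  \sum_(m < n) minn (F m) (G m) = \sum_(t < N) \sum_(m < n) ((t < F m) && (t < G m) : nat).
Proof.
move=> le_N; rewrite -exchange_big; apply: eq_bigr => m _.
exact/minn_sum_ord/le_N.
Qed.

Lemma sum_level_leq t x y : size x = n -> size y = n ->
  \sum_(m < n) ((t < nth 0 x m) && (t < nth 0 y m) : nat)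
    <= minn (count (ltn t) x) (count (ltn t) y).
Proof.
move=> szx szy; rewrite leq_min (count_nth _ szx) (count_nth _ szy).
by apply/andP; split; apply: leq_sum => m _ /=;
  case: (t < nth 0 x m); case: (t < nth 0 y m).
Qed.

Lemma sum_level_sorted t X y : size X = n -> size y = n -> sorted geq X -> sorted geq y ->
  \sum_(m < n) ((t < nth 0 X m) && (t < nth 0 y m) : nat)
    = minn (count (ltn t) X) (count (ltn t) y).
Proof.
move=> szX szy sX sy.
rewrite (eq_bigr (fun m : 'I_n => (m < minn (count (ltn t) X) (count (ltn t) y) : nat))).
  by rewrite sum_ord_ltn; apply/minn_idPl; rewrite geq_min -szX count_size.
by move=> m _; rewrite leq_min -!sorted_geq_ltn_nth ?szX ?szy.
Qed.

(* Both sides are sums over thresholds t of level-set intersections; for sorted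
   sequences the level sets are initial segments, so they overlap maximally. *)
Lemma leq_sum_minn_sorted x X y : size x = n -> size X = n -> size y = n ->
  sorted geq X -> sorted geq y -> (forall t, count (ltn t) x = count (ltn t) X) ->
  \sum_(m < n) minn (nth 0 x m) (nth 0 y m) <= \sum_(m < n) minn (nth 0 X m) (nth 0 y m).
Proof.
move=> szx szX szy sX sy eq_cnt.
pose N := \sum_(m < n) (nth 0 x m + nth 0 X m).
have le_N m : m < n -> nth 0 x m + nth 0 X m <= N.
  by move=> lt_mn; rewrite /N (bigD1 (Ordinal lt_mn)) //= leq_addr.
rewrite (@sum_minn_levels (nth 0 x) (nth 0 y) N); last by move=> m /le_N; lia.
rewrite (@sum_minn_levels (nth 0 X) (nth 0 y) N); last by move=> m /le_N; lia.
apply: leq_sum => t _; rewrite (@sum_level_sorted t X) // -eq_cnt.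
exact: sum_level_leq.
Qed.

End MinRearrangement.

Lemma exists_subset_card (T : finType) (A : {set T}) m : m <= #|A| ->
  exists2 F : {set T}, F \subset A & #|F| = m.
Proof.
case/card_geqP => s [uniq_s <- sub_sA]; exists [set x in s].
  by apply/subsetP => x; rewrite inE => /sub_sA.
by rewrite cardsE (card_uniqP uniq_s).
Qed.

Lemma subset_card_meet (T : finType) (A B : {set T}) e : A \subset B -> e <= #|B| ->
  exists F : {set T}, [/\ F \subset B, #|F| = e & #|F :&: A| = minn e #|A|].
Proof.
move=> sAB le_eB; case: (leqP e #|A|) => [le_eA|lt_Ae].
  have [F sFA <-] := exists_subset_card le_eA; exists F; split.
  - exact: subset_trans sFA sAB.
  - by [].
  - by rewrite (setIidPl sFA); have := subset_leq_card sFA; lia.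
have [|G sG cardG] := @exists_subset_card _ (B :\: A) (e - #|A|).
  by rewrite cardsD (setIidPr sAB); lia.
have disjAG : A :&: G = set0.
  apply/setP => x; rewrite !inE; case xG: (x \in G); rewrite ?andbF //.
  by have := subsetP sG x xG; rewrite inE => /andP [/negbTE ->].
exists (A :|: G); split.
- by rewrite subUset sAB (subset_trans sG (subsetDl _ _)).
- by rewrite cardsU disjAG cards0 cardG; lia.
- by rewrite setIUl setIid (setIC G) disjAG setU0; lia.
Qed.

Section Classes.
Variables n q : nat.

Definition vclass (i : 'I_n) : {set vtx n q} := [set v | v.1 == i].

Definition class_counts (K : {set vtx n q}) : seq nat :=
  [seq class_count K i | i <- enum 'I_n].

Lemma class_countE (K : {set vtx n q}) i : class_count K i = #|K :&: vclass i|.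
Proof. by apply: eq_card => v; rewrite !inE. Qed.

Lemma class_count_sum (K : {set vtx n q}) i :
  class_count K i = \sum_(j : 'I_q) ((i, j) \in K : nat).
Proof.
rewrite /class_count -sum1_card.
transitivity (\sum_(i' : 'I_n) \sum_(j : 'I_q) (((i', j) \in K) && (i' == i) : nat)).
  rewrite pair_big big_mkcond /=; apply: eq_bigr => -[i' j] _.
  by rewrite !inE; case: (_ && _).
rewrite (bigD1 i) //= [X in _ + X]big1 ?addn0.
  by apply: eq_bigr => j _; rewrite eqxx andbT.
by move=> i' /negbTE neq_i'i; apply: big1 => j _; rewrite neq_i'i andbF.
Qed.

Lemma card_vclass i : #|vclass i| = q.
Proof.
rewrite -(setTI (vclass i)) -class_countE class_count_sum.
by rewrite (eq_bigr (fun=> 1)) ?sum1_card ?card_ord // => j _; rewrite !inE.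
Qed.

Lemma class_count_le_q (K : {set vtx n q}) i : class_count K i <= q.
Proof. by rewrite class_countE -[X in _ <= X](card_vclass i) subset_leq_card ?subsetIr. Qed.

Lemma class_countI_le (E S : {set vtx n q}) i :
  class_count (E :&: S) i <= minn (class_count E i) (class_count S i).
Proof. by rewrite !class_countE leq_min !subset_leq_card // setSI // (subsetIl, subsetIr). Qed.

Lemma card_by_class (K : {set vtx n q}) : #|K| = \sum_(i : 'I_n) class_count K i.
Proof.
rewrite -sum1_card (partition_big (fun v : vtx n q => v.1) xpredT) //=.
by apply: eq_bigr => i _; rewrite /class_count -sum1_card; apply: eq_bigl => v; rewrite !inE andbC.
Qed.

Lemma size_class_counts K : size (class_counts K) = n.
Proof. by rewrite size_map size_enum_ord. Qed.

Lemma nth_class_counts K (i : 'I_n) : nth 0 (class_counts K) i = class_count K i.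
Proof. by rewrite (nth_map i) ?size_enum_ord // nth_ord_enum. Qed.

Lemma sumn_class_counts K : sumn (class_counts K) = #|K|.
Proof.
rewrite (sumn_nth (size_class_counts K)) card_by_class.
by apply: eq_bigr => i _; rewrite nth_class_counts.
Qed.

Lemma exists_class_profile (e : 'I_n -> nat) (S : {set vtx n q}) : (forall i, e i <= q) ->
  exists E : {set vtx n q}, forall i,
    class_count E i = e i /\ class_count (E :&: S) i = minn (e i) (class_count S i).
Proof.
move=> le_eq.
have /fin_all_exists [F F_spec] : forall i, exists F : {set vtx n q},
    [/\ F \subset vclass i, #|F| = e i
      & #|F :&: (S :&: vclass i)| = minn (e i) #|S :&: vclass i|].
  move=> i; apply: subset_card_meet; first exact: subsetIr.
  by rewrite card_vclass.
have EV i : (\bigcup_j F j) :&: vclass i = F i.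
  apply/setP => v; rewrite inE; apply/andP/idP => [[/bigcupP [j _ vFj] vVi]|vFi].
    have [/subsetP /(_ v vFj)] := F_spec j; rewrite !inE => /eqP vj _ _.
    by move: vVi; rewrite inE vj => /eqP <-.
  have [/subsetP /(_ v vFi) vVi _ _] := F_spec i.
  by split=> //; apply/bigcupP; exists i.
exists (\bigcup_j F j) => i; have [sFV cardF cardFS] := F_spec i.
rewrite !class_countE setIAC EV cardF -cardFS; split=> //.
by rewrite setIA setIAC (setIidPl sFV).
Qed.

Definition profile_set (c : nat -> nat) : {set vtx n q} :=
  [set v : vtx n q | v.2 < c v.1].

Lemma class_count_profile_set (c : nat -> nat) (i : 'I_n) :
  c i <= q -> class_count (profile_set c) i = c i.
Proof.
move=> le_cq; rewrite class_count_sum (eq_bigr (fun j : 'I_q => (j < c i : nat))).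
  by rewrite sum_ord_ltn; apply/minn_idPl.
by move=> j _; rewrite inE.
Qed.

Lemma class_counts_profile_set c : (forall i, c i <= q) ->
  class_counts (profile_set c) = mkseq c n.
Proof.
move=> le_cq; apply: (@eq_from_nth _ 0) => [|m]; first by rewrite size_class_counts size_mkseq.
rewrite size_class_counts => lt_mn.
by rewrite (nth_class_counts _ (Ordinal lt_mn)) class_count_profile_set // nth_mkseq.
Qed.

Lemma card_profile_set c : (forall i, c i <= q) -> #|profile_set c| = \sum_(m < n) c m.
Proof.
move=> le_cq; rewrite card_by_class.
by apply: eq_bigr => m _; rewrite class_count_profile_set.
Qed.

Lemma leq_card_alpha_k sigma k (S : {set vtx n q}) :
  k_independent sigma k S -> #|S| <= alpha_k n q sigma k.
Proof.
by move=> indS; rewrite /alpha_k (leq_bigmax_cond (F := fun S : {set vtx n q} => #|S|)).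
Qed.

Lemma alpha_k_attained sigma k :
  exists2 S : {set vtx n q}, k_independent sigma k S & #|S| = alpha_k n q sigma k.
Proof.
have indep_gt0 : 0 < #|[pred S : {set vtx n q} | k_independent sigma k S]|.
  apply/card_gt0P; exists set0; rewrite inE.
  by apply/forallP => E; apply/implyP => _; rewrite setI0 cards0.
case: (eq_bigmax_cond (fun S : {set vtx n q} => #|S|) indep_gt0) => S.
by rewrite inE => indS alphaE; exists S; rewrite // /alpha_k alphaE.
Qed.

End Classes.

Section Edges.
Variables (n q : nat) (sigma : seq nat).
Hypothesis sigma_sorted : sorted geq sigma.
Hypothesis sigma_pos : all (fun a => 0 < a) sigma.
Hypothesis size_sigma : size sigma <= n.
Hypothesis sigma_le_q : nth 0 sigma 0 <= q.

Local Notation a := (nth 0 sigma).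

Definition sigma_pad := mkseq a n.

Lemma sigma_padE : sigma_pad = sigma ++ nseq (n - size sigma) 0.
Proof.
apply: (@eq_from_nth _ 0) => [|i]; first by rewrite size_mkseq size_cat size_nseq subnKC.
rewrite size_mkseq => lt_in; rewrite nth_mkseq // nth_cat.
by case: ltnP => // le_si; rewrite nth_nseq nth_default // if_same.
Qed.

Lemma sorted_sigma_pad : sorted geq sigma_pad.
Proof.
apply/(sortedP 0) => i; rewrite size_mkseq => lt_i1n.
by rewrite !nth_mkseq ?(ltnW lt_i1n) //=; apply: sorted_geq_nth.
Qed.

Lemma filter_sigma_pad : [seq c <- sigma_pad | 0 < c] = sigma.
Proof. by rewrite sigma_padE filter_cat filter_nseq cats0; apply/all_filterP. Qed.

Lemma a_le_q i : a i <= q.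
Proof. exact: leq_trans (sorted_geq_nth sigma_sorted (leq0n i)) sigma_le_q. Qed.

Lemma count_class_counts_edge (E : {set vtx n q}) t : is_edge sigma E ->
  count (ltn t) (class_counts E) = count (ltn t) sigma_pad.
Proof.
case/andP => _ /permP perm_pos.
have count_pos s : count (ltn t) s = count (ltn t) [seq c <- s | 0 < c].
  by rewrite count_filter; apply: eq_count => u /=; lia.
by rewrite count_pos perm_pos -filter_sigma_pad -count_pos.
Qed.

Lemma is_edge_perm (E : {set vtx n q}) :
  perm_eq (class_counts E) sigma_pad -> is_edge sigma E.
Proof.
move=> pE; apply/andP; split.
  by rewrite -sumn_class_counts (perm_sumn pE) sigma_padE sumn_cat sumn_nseq mul0n addn0.
by rewrite -filter_sigma_pad perm_filter.
Qed.

Lemma card_edge_meet_le (E S : {set vtx n q}) :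
  is_edge sigma E -> sorted geq (class_counts S) ->
  #|E :&: S| <= \sum_(m < n) minn (a m) (nth 0 (class_counts S) m).
Proof.
move=> edgeE sS; rewrite card_by_class.
set cS := class_counts S.
apply: leq_trans (_ : \sum_(m < n) minn (nth 0 (class_counts E) m) (nth 0 cS m) <= _).
  by apply: leq_sum => i _; rewrite !nth_class_counts class_countI_le.
rewrite [X in _ <= X](eq_bigr (fun m : 'I_n => minn (nth 0 sigma_pad m) (nth 0 cS m))).
  apply: leq_sum_minn_sorted; rewrite ?size_class_counts ?size_mkseq ?sorted_sigma_pad // => t.
  exact: count_class_counts_edge.
by move=> m _; rewrite nth_mkseq.
Qed.

Lemma k_independent_profile_set k c : (forall i, c i <= q) -> sorted geq (mkseq c n) ->
  \sum_(m < n) minn (a m) (c m) <= k -> k_independent sigma k (profile_set n q c).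
Proof.
move=> le_cq sc le_k; apply/forallP => E; apply/implyP => edgeE.
apply: leq_trans (card_edge_meet_le edgeE _) _; rewrite class_counts_profile_set //.
by apply: leq_trans le_k; apply: eq_leq; apply: eq_bigr => m _; rewrite nth_mkseq.
Qed.

Lemma k_independent_sorted_bound k (S : {set vtx n q}) : k_independent sigma k S ->
  \sum_(m < n) minn (a m) (nth 0 (sort geq (class_counts S)) m) <= k.
Proof.
move=> indS; set cS := class_counts S.
have /(perm_iotaP 0) [Is pIs sortE] : perm_eq (sort geq cS) cS by rewrite perm_sort.
rewrite size_class_counts in pIs.
have szIs : size Is = n by rewrite (perm_size pIs) size_iota.
have [E E_spec] :=
  @exists_class_profile n q (fun i : 'I_n => a (index (i : nat) Is)) S (fun i => a_le_q _).
have csE : class_counts E = [seq a (index i Is) | i <- iota 0 n].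
  by rewrite -val_enum_ord -map_comp; apply/eq_map => i; rewrite /= (E_spec i).1.
have edgeE : is_edge sigma E by apply: is_edge_perm; rewrite csE perm_index_iota.
have := forallP indS E; rewrite edgeE /= => le_k.
apply: leq_trans le_k; rewrite card_by_class; apply: eq_leq.
rewrite [RHS](eq_bigr (fun i : 'I_n => minn (a (index (i : nat) Is)) (nth 0 cS i))).
  rewrite (@sum_index_perm_iota n (fun m i => minn (a m) (nth 0 cS i))) //.
  by apply: eq_bigr => m _; rewrite sortE (nth_map 0) ?szIs.
by move=> i _; rewrite (E_spec i).2 nth_class_counts.
Qed.

End Edges.

Section Feasible.
Variables (n q k : nat) (sigma : seq nat).

Local Notation feasible := (feasible n q k sigma).
Local Notation maximal_feasible := (maximal_feasible n q k sigma).

Lemma feasible_nth_le B i j : feasible B -> i <= j -> nth 0 B j <= nth 0 B i.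
Proof. by case=> _ sB _ _ _; exact: sorted_geq_nth. Qed.

Lemma feasible_nth_le_q B i : feasible B -> nth 0 B i <= q.
Proof.
move=> feasB; apply: leq_trans (feasible_nth_le feasB (leq0n i)) _.
by case: feasB => _ _ _; rewrite geq_max => /andP [].
Qed.

Lemma feasible_sum_le B : feasible B -> \sum_(i < n) nth 0 B i <= n * q.
Proof.
move=> feasB; rewrite -[n in n * q]card_ord -sum_nat_const.
by apply: leq_sum => i _; exact: feasible_nth_le_q.
Qed.

Lemma exists_maximal_feasible B : feasible B ->
  exists2 B', maximal_feasible B' & \sum_(i < n) nth 0 B i <= \sum_(i < n) nth 0 B' i.
Proof.
move: {2}(n * q - _) (leqnn (n * q - \sum_(i < n) nth 0 B i)) => d.
elim: d B => [|d IH] B le_d feasB;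
  (have [[Bs [feasBs [_ lt_B_Bs]]]|no_dom] :=
     classic (exists Bs, feasible Bs /\ dominates n Bs B); last by exists B).
- by have := feasible_sum_le feasBs; lia.
- have [|B' maxB' le_Bs_B'] := IH Bs _ feasBs; first by have := feasible_sum_le feasBs; lia.
  by exists B' => //; exact: leq_trans (ltnW lt_B_Bs) le_Bs_B'.
Qed.

End Feasible.

Section Profiles.
Variables (n q k : nat) (sigma : seq nat).
Hypothesis sigma_sorted : sorted geq sigma.
Hypothesis sigma_pos : all (fun a => 0 < a) sigma.
Hypothesis size_sigma : size sigma <= n.
Hypothesis sigma_le_q : nth 0 sigma 0 <= q.
Hypothesis k_lt_r : k < sumn sigma.

Local Notation s := (size sigma).
Local Notation a := (nth 0 sigma).
Local Notation feasible := (feasible n q k sigma).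

Lemma size_sigma_gt0 : 0 < s.
Proof. by move: k_lt_r; case: sigma. Qed.

Lemma sum_minn_sigma (c : nat -> nat) :
  \sum_(m < n) minn (a m) (c m) = \sum_(i < s) minn (a i) (c i).
Proof.
rewrite (big_ord_widen n (fun m => minn (a m) (c m)) size_sigma) [RHS]big_mkcond /=.
by apply: eq_bigr => m _; case: ltnP => // le_sm; rewrite nth_default ?min0n.
Qed.

Definition subfeasible (f : nat -> nat) : Prop :=
  [/\ forall i j, i <= j < n -> f j <= f i,
      forall m, s.-1 <= m < n -> f m = f s.-1,
      f 0 <= q
    & \sum_(i < s) minn (a i) (f i) <= k].

Lemma exists_deficit (f : nat -> nat) : \sum_(i < s) minn (a i) (f i) < k ->
  exists j, [/\ j < s, f j < a j & forall i, i < j -> f j < f i].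
Proof.
move=> lt_k; have exP : exists j, (j < s) && (f j < a j).
  case: (boolP [exists j : 'I_s, f j < a j]) => [/existsP [j lt_fa]|].
    by exists j; rewrite ltn_ord.
  rewrite negb_exists => /forallP no_deficit; move: lt_k.
  have -> : \sum_(i < s) minn (a i) (f i) = sumn sigma.
    rewrite (sumn_nth (erefl s)); apply: eq_bigr => i _.
    by apply/minn_idPl; rewrite leqNgt no_deficit.
  by move/(ltn_trans k_lt_r); rewrite ltnn.
have [j /andP [lt_js lt_fa] minj] := ex_minnP exP.
exists j; split=> // i lt_ij.
have : ~~ ((i < s) && (f i < a i)) by apply/negP => /minj; rewrite leqNgt lt_ij.
rewrite (ltn_trans lt_ij lt_js) /= -leqNgt => le_af.
exact: leq_trans (leq_trans lt_fa (sorted_geq_nth sigma_sorted (ltnW lt_ij))) le_af.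
Qed.

(* Raising f at its first deficit j adds exactly one to sum_i min(a_i, f_i); when
   j is the last part, the whole constant tail is raised with it. *)
Definition raised j m : bool := if j < s.-1 then m == j else s.-1 <= m.

Definition raise (f : nat -> nat) j m := f m + raised j m.

Lemma raised_lt_s j m : j < s -> m < s -> raised j m = (m == j).
Proof.
rewrite /raised; case: (ltnP j s.-1) => // le_s1j lt_js lt_ms.
by apply/idP/eqP => [|->] //; lia.
Qed.

Lemma raised_tail j m : s.-1 <= m -> raised j m = raised j s.-1.
Proof.
rewrite /raised; case: (ltnP j s.-1) => [lt_js1 le_s1m|_ ->]; last by rewrite leqnn.
by rewrite (gtn_eqF lt_js1) (gtn_eqF (leq_trans lt_js1 le_s1m)).
Qed.

Lemma raised_lt j i m : i <= m -> raised j m -> ~~ raised j i -> i < j.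
Proof.
rewrite /raised; case: (ltnP j s.-1) => [_|le_s1j le_im le_s1m].
  by move=> le_im /eqP eq_mj /eqP neq_ij; lia.
by rewrite -ltnNge => /leq_trans; apply.
Qed.

Lemma raised_val (f : nat -> nat) j m : (forall m, s.-1 <= m < n -> f m = f s.-1) ->
  j < s -> raised j m -> m < n -> f m = f j.
Proof.
move=> f_tail lt_js; rewrite /raised.
case: (ltnP j s.-1) => [_ /eqP -> //|le_s1j le_s1m lt_mn].
have -> : j = s.-1 by lia.
by rewrite f_tail // le_s1m.
Qed.

Lemma sum_minn_raise f j : j < s -> f j < a j ->
  \sum_(i < s) minn (a i) (raise f j i) = (\sum_(i < s) minn (a i) (f i)).+1.
Proof.
move=> lt_js lt_fa.
rewrite (eq_bigr (fun i : 'I_s => minn (a i) (f i) + (nat_of_ord i == j))) => [|i _].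
  rewrite big_split /= -addn1; congr (_ + _).
  rewrite (bigD1 (Ordinal lt_js)) //= eqxx big1 // => i.
  by rewrite -val_eqE /= => /negbTE ->.
rewrite /raise raised_lt_s //; case: eqP => [->|_] /=; first lia.
by rewrite !addn0.
Qed.

Lemma n_gt0 : 0 < n.
Proof. exact: leq_trans size_sigma_gt0 size_sigma. Qed.

Lemma subfeasible_raise f j : subfeasible f -> j < s -> f j < a j ->
  (forall i, i < j -> f j < f i) -> \sum_(i < s) minn (a i) (f i) < k ->
  subfeasible (raise f j).
Proof.
move=> [f_mono f_tail f0 f_k] lt_js lt_fa gap lt_k; split.
- move=> i m /andP [le_im lt_mn]; rewrite /raise.
  have le_f : f m <= f i by apply: f_mono; rewrite le_im.
  case rm: (raised j m); case ri: (raised j i); rewrite /= ?addn0 ?leq_add2r //.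
    rewrite (raised_val f_tail lt_js rm lt_mn) addn1.
    by apply: gap; exact: raised_lt le_im rm (negbT ri).
  exact: leq_trans le_f (leq_addr _ _).
- move=> m /andP [le_s1m lt_mn].
  by rewrite /raise (raised_tail _ le_s1m) f_tail // le_s1m.
- rewrite /raise; case r0: (raised j 0) => /=; last by rewrite addn0.
  rewrite (raised_val f_tail lt_js r0 n_gt0) addn1.
  exact: leq_trans lt_fa (a_le_q sigma_sorted sigma_le_q j).
- by rewrite sum_minn_raise.
Qed.

Lemma subfeasible_complete f : subfeasible f -> exists g,
  [/\ subfeasible g, \sum_(i < s) minn (a i) (g i) = k
    & \sum_(m < n) f m <= \sum_(m < n) g m].
Proof.
move: {2}(k - _) (erefl (k - \sum_(i < s) minn (a i) (f i))) => d.
elim: d f => [|d IH] f def_d subf.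
  by exists f; split=> //; case: subf => _ _ _; lia.
have lt_k : \sum_(i < s) minn (a i) (f i) < k by lia.
have [j [lt_js lt_fa gap]] := exists_deficit lt_k.
have subf' := subfeasible_raise subf lt_js lt_fa gap lt_k.
have [|g [subg sum_g le_fg]] := IH (raise f j) _ subf'.
  by rewrite sum_minn_raise //; lia.
exists g; split=> //; apply: leq_trans le_fg.
by apply: leq_sum => m _; exact: leq_addr.
Qed.

Lemma feasible_of_subfeasible f : subfeasible f -> \sum_(i < s) minn (a i) (f i) = k ->
  feasible (mkseq f n).
Proof.
move=> [f_mono f_tail f0 _] sum_f; split.
- by rewrite size_mkseq.
- apply/(sortedP 0) => i; rewrite size_mkseq => lt_i1n.
  by rewrite !nth_mkseq ?(ltnW lt_i1n) //=; apply: f_mono; rewrite leqnSn.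
- move=> m /andP [le_s1m lt_mn]; rewrite !nth_mkseq ?f_tail ?le_s1m //.
  exact: leq_ltn_trans le_s1m lt_mn.
- by rewrite nth_mkseq ?n_gt0 // geq_max sigma_le_q.
- rewrite -sum_f; apply: eq_bigr => i _; rewrite nth_mkseq //.
  exact: leq_trans (ltn_ord i) size_sigma.
Qed.

(* The profile (q, ..., q, b_t, ..., b_n) with t = t(B): as a_i <= b_i for i < t, it
   keeps sum_i min(a_i, .) = k, and its profile set has value(B) vertices. *)
Definition fill B m := if m < (tB sigma B).-1 then q else nth 0 B m.

Lemma tB_le B : (tB sigma B).-1 <= s.
Proof. by have := find_size (fun i => nth 0 B i < a i) (iota 0 s); rewrite size_iota. Qed.

Lemma sigma_le_before_tB B m : m < (tB sigma B).-1 -> a m <= nth 0 B m.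
Proof.
move=> lt_mt; have := before_find 0 lt_mt.
by rewrite nth_iota ?(leq_trans lt_mt (tB_le B)) // add0n => /negbT; rewrite -leqNgt.
Qed.

Lemma fill_le_q B m : feasible B -> fill B m <= q.
Proof. by move=> feasB; rewrite /fill; case: ifP => // _; exact: feasible_nth_le_q feasB. Qed.

Lemma fill_mono B i j : feasible B -> i <= j -> fill B j <= fill B i.
Proof.
move=> feasB le_ij; rewrite /fill; case: ifP => lt_jt; case: ifP => lt_it //.
- by move: lt_it lt_jt; lia.
- exact: feasible_nth_le_q feasB.
- exact: feasible_nth_le feasB le_ij.
Qed.

Lemma sum_minn_fill B : feasible B -> \sum_(m < n) minn (a m) (fill B m) = k.
Proof.
move=> feasB; rewrite sum_minn_sigma; case: (feasB) => _ _ _ _ <-.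
apply: eq_bigr => i _; rewrite /fill; case: ifP => // lt_it.
have := sigma_le_before_tB lt_it; have := a_le_q sigma_sorted sigma_le_q i; lia.
Qed.

Lemma value_fill B : feasible B -> value n q sigma B = \sum_(m < n) fill B m.
Proof.
move=> feasB; rewrite /value; set t := (tB sigma B).-1.
have le_ts : t <= s := tB_le B.
rewrite -(big_mkord xpredT) (big_cat_nat (leq0n t) (leq_trans le_ts size_sigma)) /=.
rewrite (big_cat_nat le_ts size_sigma) /=.
rewrite (eq_big_nat _ _ (F1 := fill B) (F2 := fun=> q)) => [|i /andP [_ lt_it]]; last first.
  by rewrite /fill lt_it.
rewrite (eq_big_nat _ _ (F1 := fill B) (F2 := nth 0 B)) => [|i /andP [le_ti _]]; last first.
  by rewrite /fill ltnNge le_ti.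
rewrite (eq_big_nat _ _ (F1 := fill B) (F2 := fun=> nth 0 B s.-1)) => [|i /andP [le_si lt_in]].
  by rewrite !sum_nat_const_nat subn0 mulnC [(n - s) * _]mulnC addnA.
rewrite /fill ltnNge (leq_trans le_ts le_si) /=.
by case: feasB => _ _ tail _ _; apply: tail; rewrite lt_in andbT; lia.
Qed.

Lemma sum_le_value B : feasible B -> \sum_(m < n) nth 0 B m <= value n q sigma B.
Proof.
move=> feasB; rewrite value_fill //; apply: leq_sum => m _; rewrite /fill.
by case: ifP => // _; exact: feasible_nth_le_q feasB.
Qed.

Lemma value_le_alpha_k B : feasible B -> value n q sigma B <= alpha_k n q sigma k.
Proof.
move=> feasB; have le_fq m : fill B m <= q := fill_le_q m feasB.
rewrite value_fill // -(card_profile_set n le_fq); apply: leq_card_alpha_k.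
apply: k_independent_profile_set => //; last by rewrite sum_minn_fill.
apply/(sortedP 0) => i; rewrite size_mkseq => lt_i1n.
by rewrite !nth_mkseq ?(ltnW lt_i1n) //=; apply: fill_mono.
Qed.

(* The sorted class counts of S, made constant from position s on; truncation only
   increases the entries, as the counts are nonincreasing. *)
Definition sorted_profile (S : {set vtx n q}) m :=
  nth 0 (sort geq (class_counts S)) (minn m s.-1).

Lemma subfeasible_sorted_profile (S : {set vtx n q}) :
  k_independent sigma k S -> subfeasible (sorted_profile S).
Proof.
move=> indS; set ss := sort geq (class_counts S).
have sorted_ss : sorted geq ss by apply: sort_sorted => x y; exact: leq_total.
split.
- by move=> i j /andP [le_ij _]; apply: sorted_geq_nth sorted_ss _; lia.
- by move=> m /andP [le_s1m _]; rewrite /sorted_profile (minn_idPr le_s1m) minnn.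
- have /allP : all (fun c => c <= q) ss.
    by rewrite all_sort; apply/allP => c /mapP [i _ ->]; exact: class_count_le_q.
  by apply; apply: mem_nth; rewrite size_sort size_class_counts min0n n_gt0.
- apply: leq_trans (k_independent_sorted_bound sigma_sorted sigma_pos size_sigma sigma_le_q indS).
  rewrite sum_minn_sigma; apply: eq_leq; apply: eq_bigr => i _.
  by rewrite /sorted_profile; congr (minn _ (nth 0 ss _)); have := ltn_ord i; lia.
Qed.

Lemma card_le_sorted_profile (S : {set vtx n q}) : #|S| <= \sum_(m < n) sorted_profile S m.
Proof.
set ss := sort geq (class_counts S).
have size_ss : size ss = n by rewrite size_sort size_class_counts.
rewrite -sumn_class_counts -(perm_sumn (permEl (perm_sort geq _))) (sumn_nth size_ss).
apply: leq_sum => m _; apply: sorted_geq_nth (geq_minl m s.-1).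
by apply: sort_sorted => x y; exact: leq_total.
Qed.

Lemma exists_maximal_feasible_ge_alpha_k :
  exists2 B, maximal_feasible n q k sigma B & alpha_k n q sigma k <= value n q sigma B.
Proof.
have [S indS <-] := alpha_k_attained n q sigma k.
have [g [subg sum_g le_fg]] := subfeasible_complete (subfeasible_sorted_profile indS).
have [B maxB le_gB] := exists_maximal_feasible (feasible_of_subfeasible subg sum_g).
exists B => //; apply: leq_trans (card_le_sorted_profile S) _.
apply: leq_trans le_fg (leq_trans _ (leq_trans le_gB (sum_le_value maxB.1))).
by apply: eq_leq; apply: eq_bigr => m _; rewrite nth_mkseq.
Qed.

End Profiles.

Theorem theorem2p8 (sigma : seq nat) (n q k : nat) :
  sorted geq sigma ->
  all (fun a => 0 < a) sigma ->
  0 < sumn sigma ->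
  size sigma <= n ->
  nth 0 sigma 0 <= q ->
  1 <= k <= (sumn sigma).-1 ->
  (exists2 B, maximal_feasible n q k sigma B & value n q sigma B = alpha_k n q sigma k) /\
  (forall B, maximal_feasible n q k sigma B -> value n q sigma B <= alpha_k n q sigma k).
Proof.
move=> sigma_sorted sigma_pos r_gt0 size_sigma sigma_le_q /andP [_ k_le_r1].
have k_lt_r : k < sumn sigma by rewrite -(prednK r_gt0) ltnS.
have value_le := value_le_alpha_k sigma_sorted sigma_pos size_sigma sigma_le_q k_lt_r.
have [B maxB ge_alpha] :=
  exists_maximal_feasible_ge_alpha_k sigma_sorted sigma_pos size_sigma sigma_le_q k_lt_r.
split=> [|B' [feasB' _]]; last exact: value_le.
by exists B => //; apply/eqP; rewrite eqn_leq ge_alpha value_le //; case: maxB.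
Qed.
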